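(* Let $G$ be a finite group, $\rho:G\to SO(n)$ a faithful real representation, and $L=F(G)$ the Fitting subgroup of $G$. Let $U=\mathbb{R}^n$ with $G$-action via $\rho$, $U^L$ the $L$-fixed subspace, $U_L$ its orthogonal complement, and $\rho_L: G\to O(\dim U_L)$ the subrepresentation on $U_L$. Let $K=\ker\rho_L$. Then the Fitting subgroup $F(K)$ of $K$ is trivial.
   Context: The Fitting subgroup $F(X)$ of a finite group $X$ is its unique largest nilpotent normal subgroup. *)

From HB Require Import structures.
From mathcomp Require Import all_boot all_order all_algebra all_fingroup all_solvable.
From mathcomp Require Import mxrepresentation.
From mathcomp Require Import reals.
Set Implicit Arguments. Unset Strict Implicit. Unset Printing Implicit Defensive.
Import GRing.Theory.
Local Open Scope ring_scope.

(* Real representations act on row vectors: v |-> v *m rG g.  The standard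
   inner product on 'rV_n is <u, v> = u *m v^T. *)

Definition in_SO (R : realType) n (A : 'M[R]_n) : Prop :=
  A *m A^T = 1%:M /\ \det A = 1.

(* Orthogonal complement (w.r.t. the standard inner product) of the row
   space of W: the row space of kermx W^T = { v | v *m W^T = 0 }. *)
Definition orth_compl (R : realType) m n (W : 'M[R]_(m, n)) : 'M[R]_n :=
  kermx W^T.

Definition U_L (R : realType) (gT : finGroupType) (G : {group gT}) n
  (rG : mx_representation R G n) : 'M[R]_n :=
  orth_compl (rfix_mx rG 'F(G)%g).

Definition K_L (R : realType) (gT : finGroupType) (G : {group gT}) n
  (rG : mx_representation R G n) : {group gT} :=
  rstab_group rG (U_L rG).

From HB Require Import structures.
From mathcomp Require Import all_boot all_order all_algebra all_fingroup all_solvable.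
From mathcomp Require Import mxrepresentation.
From mathcomp Require Import reals.
Set Implicit Arguments. Unset Strict Implicit. Unset Printing Implicit Defensive.
Import GRing.Theory Num.Theory.
Local Open Scope ring_scope.

(* Since rho is orthogonal, the orthogonal complement U_L of the G-submodule
   U^L is again a G-submodule, so K = ker rho_L is normal in G and F(K) is
   contained in F(G) = L.  Hence F(K) acts trivially both on U^L (as a
   subgroup of L) and on U_L (as a subgroup of K).  Over the reals
   U = U^L (+) U_L, so F(K) acts trivially on U and faithfulness forces
   F(K) = 1. *)

Lemma mulmx_tr_eq0 (R : realDomainType) m n (A : 'M[R]_(m, n)) :
  A *m A^T = 0 -> A = 0.
Proof.
move=> AAt0; apply/matrixP=> i j; rewrite mxE.
have := congr1 (fun M : 'M[R]_m => M i i) AAt0; rewrite !mxE => sum_sq0.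
have sq_ge0 k : true -> 0 <= A i k * A^T k i by rewrite mxE -expr2 sqr_ge0.
have /eqP := @psumr_eq0P _ _ _ _ sq_ge0 sum_sq0 j isT.
by rewrite mxE mulf_eq0 orbb => /eqP.
Qed.

Section RealOrthogonalComplement.

Variables (R : realFieldType) (m n : nat) (W : 'M[R]_(m, n)).

Lemma capmx_kermx_tr : (W :&: kermx W^T)%MS = 0.
Proof.
apply: mulmx_tr_eq0.
have [D defWK] := submxP (capmxSl W (kermx W^T)).
have /sub_kermxP WK_W0 := capmxSr W (kermx W^T).
by rewrite [X in _ *m X^T]defWK trmx_mul mulmxA WK_W0 mul0mx.
Qed.

Lemma addsmx_kermx_tr_full : row_full (W + kermx W^T)%MS.
Proof.
have := mxrank_sum_cap W (kermx W^T).
rewrite capmx_kermx_tr mxrank0 addn0 mxrank_ker mxrank_tr => rank_sum.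
by rewrite /row_full rank_sum subnKC // rank_leq_col.
Qed.

End RealOrthogonalComplement.

Section OrthogonalRepresentation.

Variables (F : fieldType) (gT : finGroupType) (G : {group gT}) (n : nat).
Variable rG : mx_representation F G n.

Lemma rstab_addsmx m1 m2 (U : 'M_(m1, n)) (V : 'M_(m2, n)) :
  rstab rG (U + V)%MS = rstab rG U :&: rstab rG V.
Proof.
rewrite (eqmx_rstab rG (addsmxE U V)).
apply/setP=> x; rewrite !inE mul_col_mx andbACA andbb.
case: (x \in G) => //=.
by apply/eqP/andP=> [/eq_col_mx[-> ->] | [/eqP-> /eqP->]].
Qed.

Hypothesis orthG : forall x, x \in G -> rG x *m (rG x)^T = 1%:M.

Lemma orthogonal_repr_tr x : x \in G -> (rG x)^T = rG x^-1%g.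
Proof.
move=> Gx; have orth_tr : (rG x)^T *m rG x = 1%:M by apply: mulmx1C; apply: orthG.
rewrite -[LHS]mulmx1 -(repr_mx1 rG) -(mulgV x) repr_mxM ?groupV //.
by rewrite mulmxA orth_tr mul1mx.
Qed.

Lemma mxmodule_kermx_tr m (W : 'M_(m, n)) :
  mxmodule rG W -> mxmodule rG (kermx W^T).
Proof.
move=> modW; apply/mxmoduleP=> x Gx; apply/sub_kermxP; rewrite -mulmxA.
have /submxP[D defWx] : (W *m rG x^-1%g <= W)%MS by apply: (mxmoduleP modW); rewrite groupV.
have -> : rG x *m W^T = (W *m rG x^-1%g)^T by rewrite trmx_mul -orthogonal_repr_tr // trmxK.
by rewrite defWx trmx_mul mulmxA (sub_kermxP (submx_refl _)) mul0mx.
Qed.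

End OrthogonalRepresentation.

Theorem proposition2p7 (R : realType) (gT : finGroupType) (G : {group gT}) (n : nat)
  (rG : mx_representation R G n) :
  mx_faithful rG ->
  (forall g, g \in G -> in_SO (rG g)) ->
  ('F(K_L rG))%g = 1%g.
Proof.
move=> faithful_rG SO_rG.
set W := rfix_mx rG 'F(G)%g.
have orthG x : x \in G -> rG x *m (rG x)^T = 1%:M by case/SO_rG.
have modUL : mxmodule rG (U_L rG).
  exact/mxmodule_kermx_tr/normal_rfix_mx_module/Fitting_normal.
have sFK_FG : ('F(K_L rG) \subset 'F(G))%g.
  exact: Fitting_max (gFnormal_trans _ (rstab_normal modUL)) (Fitting_nil _).
have sFG_stabW : ('F(G) \subset rstab rG W)%g.
  by rewrite rfix_mx_rstabC ?Fitting_sub.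
have full_W_UL : (1%:M <= W + U_L rG)%MS by rewrite sub1mx; exact: addsmx_kermx_tr_full.
apply/trivgP; apply: subset_trans faithful_rG; apply: subset_trans (rstabS rG full_W_UL).
by rewrite rstab_addsmx subsetI (subset_trans sFK_FG sFG_stabW) Fitting_sub.
Qed.
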